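(* Consider the genetic algorithm with adaptive population size (APGA) described in the context, with maximum lifetime parameter $MaxLT$ and an arbitrary initial population size $P(0)\ge 1$. Then, regardless of $P(0)$, the population size after $MaxLT$ generations satisfies $$P(MaxLT) \le 2\,MaxLT + 1.$$
   Context: APGA is a steady-state genetic algorithm in which every individual carries a remaining lifetime (RLT). Parameters: an initial population size $P(0)$ and lifetime bounds $1\le MinLT\le MaxLT$; every individual, whether in the initial population or newly created, is assigned at creation a lifetime (its initial RLT) which is a positive integer between $MinLT$ and $MaxLT$ (the assignment may depend on fitness, e.g. via a bi-linear rule, but never exceeds $MaxLT$). Generation $t\ge 1$ proceeds as follows, starting from the population at the end of generation $t-1$: (1) decrement by 1 the RLT of every member except the best (highest-fitness) member of the population; (2) select 2 individuals, apply crossover and mutation to obtain 2 offspring, evaluate them and insert them into the population; (3) remove from the population all members whose RLT equals 0; (4) assign lifetimes (RLT values) to the 2 new members. $P(t)$ denotes the population size at the end of generation $t$, and $P(0)$ the size of the initial population. *)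

From mathcomp Require Import all_boot all_order.
Set Implicit Arguments. Unset Strict Implicit. Unset Printing Implicit Defensive.
Import Order.TTheory.
Local Open Scope order_scope.

(* An individual (fitness, identifier, RLT): a fitness value (in an arbitrary totally ordered type),
   a unique identifier (used only to make "the best member" well defined
   when fitnesses tie), and its remaining lifetime (RLT). *)
Definition indiv (d : Order.disp_t) (T : orderType d) : Type := (T * nat * nat)%type.
Definition Indiv d (T : orderType d) (f : T) (i r : nat) : indiv T := (f, i, r).
Definition fit d (T : orderType d) (x : indiv T) : T := x.1.1.
Definition uid d (T : orderType d) (x : indiv T) : nat := x.1.2.
Definition rlt d (T : orderType d) (x : indiv T) : nat := x.2.

Section APGA.
Variables (d : Order.disp_t) (T : orderType d).

Definition population := seq (indiv T).

Definition worse (y b : indiv T) : bool :=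
  (fit y < fit b) || ((fit y == fit b) && (uid b < uid y)%N).

Definition is_best (p : population) (b : indiv T) : Prop :=
  b \in p /\ forall y, y \in p -> uid y != uid b -> worse y b.

Definition ids (p : population) : seq nat := map (@uid _ T) p.

Definition decr_except (b : indiv T) (p : population) : population :=
  map (fun y => if uid y == uid b then y
                else Indiv (fit y) (uid y) (rlt y).-1) p.

(* One generation t >= 1, from population p (end of t-1) to p' (end of t):
   (1) decrement RLTs except the best member's, (2) create two offspring
   (arbitrary fitness; fresh identifiers), (3) remove the old members whose
   RLT is 0 (offspring have no lifetime yet and are not removed),
   (4) assign the offspring lifetimes in [MinLT, MaxLT]. *)
Definition apga_step (MinLT MaxLT : nat) (p p' : population) : Prop :=
  exists b f1 f2 i1 i2 l1 l2,
    is_best p b /\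
    i1 \notin ids p /\ i2 \notin ids p /\ i1 != i2 /\
    (MinLT <= l1 <= MaxLT)%N /\ (MinLT <= l2 <= MaxLT)%N /\
    p' = [seq y <- decr_except b p | rlt y != 0%N]
           ++ [:: Indiv f1 i1 l1; Indiv f2 i2 l2].

Definition apga_init (MinLT MaxLT : nat) (p : population) : Prop :=
  (0 < size p)%N /\ uniq (ids p) /\
  forall y, y \in p -> (MinLT <= rlt y <= MaxLT)%N.

End APGA.

(* Every generation removes nothing but dead members and adds exactly two
   offspring, so at most 2t members of the population at time t were born
   after time 0.  The best member is never decremented, hence never removed,
   and the best member of the next population is at least as good; so an
   initial member worse than the initial best stays worse than the current
   best forever, loses one unit of lifetime per generation, and is dead after
   MaxLT generations.  Only the initial best can survive. *)
From mathcomp Require Import all_boot all_order.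
From mathcomp Require Import zify.
Set Implicit Arguments. Unset Strict Implicit. Unset Printing Implicit Defensive.
Import Order.TTheory.
Local Open Scope order_scope.

Section APGAPopulation.
Variables (d : Order.disp_t) (T : orderType d).
Implicit Types (p O : population T) (b c y : indiv T).

Lemma worse_irr y : ~~ worse y y.
Proof. by rewrite /worse ltxx ltnn eqxx. Qed.

Lemma worse_trans c y b : worse y c -> worse c b -> worse y b.
Proof.
rewrite /worse => /orP[H1|/andP[/eqP E1 H1]] /orP[H2|/andP[/eqP E2 H2]].
- by rewrite (lt_trans H1 H2).
- by rewrite -E2 H1.
- by rewrite E1 H2.
- by rewrite E1 E2 eqxx (ltn_trans H2 H1) orbT.
Qed.

Lemma ids_cat p O : ids (p ++ O) = ids p ++ ids O.
Proof. exact: map_cat. Qed.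

Lemma uid_inj p : uniq (ids p) -> {in p &, injective (@uid _ T)}.
Proof.
elim: p => //= a p IH /andP[a_p /IH {}IH] x y; rewrite !inE.
case/predU1P=> [-> | x_p] /predU1P[-> | y_p] // E.
- by move: a_p; rewrite E map_f.
- by move: a_p; rewrite -E map_f.
- exact: IH.
Qed.

Section Best.
Variables (p : population T) (b : indiv T).
Hypotheses (Up : uniq (ids p)) (best_b : is_best p b).

Lemma worse_best c y : c \in p -> worse y c -> worse y b.
Proof.
have [b_p better_b] := best_b => c_p y_c.
have [/(uid_inj Up c_p b_p) <- // | ncb] := eqVneq (uid c) (uid b).
exact: worse_trans y_c (better_b c c_p ncb).
Qed.

Lemma uid_worse_best y : y \in p -> worse y b -> uid y != uid b.
Proof.
have [b_p _] := best_b => y_p; apply: contraTN => /eqP /(uid_inj Up y_p b_p) ->.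
exact: worse_irr.
Qed.

End Best.

Definition survivors b p : population T := [seq y <- decr_except b p | rlt y != 0%N].

Lemma survivors_cat b p O : survivors b (p ++ O) = survivors b p ++ survivors b O.
Proof. by rewrite /survivors /decr_except map_cat filter_cat. Qed.

Lemma size_survivors b p : (size (survivors b p) <= size p)%N.
Proof. by rewrite size_filter (leq_trans (count_size _ _)) // size_map. Qed.

Lemma ids_survivors b p : subseq (ids (survivors b p)) (ids p).
Proof.
have -> : ids p = ids (decr_except b p).
  by rewrite /ids /decr_except -map_comp; apply: eq_map => y /=; case: ifP.
exact/map_subseq/filter_subseq.
Qed.

Lemma mem_survivors_self b p : b \in p -> (0 < rlt b)%N -> b \in survivors b p.
Proof.
move=> b_p rlt_b; rewrite mem_filter -lt0n rlt_b /=.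
by apply/mapP; exists b; rewrite ?eqxx.
Qed.

Section Step.
Variables (MinLT MaxLT : nat) (p p' : population T).
Hypothesis step : apga_step MinLT MaxLT p p'.

Lemma apga_step_uniq : uniq (ids p) -> uniq (ids p').
Proof.
have [b [f1 [f2 [i1 [i2 [l1 [l2 [_ [i1_p [i2_p [i12 [_ [_ def_p']]]]]]]]]]]]] := step.
move=> Up; have sub := ids_survivors b p.
rewrite def_p' ids_cat cat_uniq (subseq_uniq sub Up) /= inE negb_or i12 orbF !andbT.
by apply/andP; split; apply/negP => /(mem_subseq sub); apply/negP.
Qed.

Lemma apga_step_rlt_gt0 : (0 < MinLT)%N -> forall y, y \in p' -> (0 < rlt y)%N.
Proof.
have [b [f1 [f2 [i1 [i2 [l1 [l2 [_ [_ [_ [_ [l1_lt [l2_lt def_p']]]]]]]]]]]]] := step.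
move=> MinLT_gt0 y; rewrite def_p' mem_cat mem_filter !inE -lt0n.
case/orP=> [/andP[] // | /orP[] /eqP -> /=]; lia.
Qed.

End Step.

Definition dominated p y : Prop := exists2 c, c \in p & worse y c.

(* [O] is the part of [p] descending from the initial population, [u0] is the
   identifier of the initial best member and [t] the current generation. *)
Definition aging (u0 MaxLT t : nat) p O : Prop :=
  forall y, y \in O -> uid y != u0 -> dominated p y /\ (rlt y + t <= MaxLT)%N.

Lemma aging_survivors u0 MaxLT t p O b p' :
    uniq (ids p) -> is_best p b -> {subset O <= p} -> b \in p' ->
  aging u0 MaxLT t p O -> aging u0 MaxLT t.+1 p' (survivors b O).
Proof.
move=> Up best_b sub_O b_p' ageO y' /[!mem_filter] /andP[+ /mapP[y y_O def_y']].
rewrite {y'}def_y'.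
have [yu0 | nyu0] := eqVneq (uid y) u0; first by case: ifP; rewrite /= ?yu0 ?eqxx.
have [[c c_p y_c] rlt_y] := ageO y y_O nyu0.
have y_b := worse_best Up best_b c_p y_c.
rewrite (negbTE (uid_worse_best Up best_b (sub_O y y_O) y_b)) => rlt_y' _.
by split; [exists b | move: rlt_y' rlt_y; rewrite /rlt /=; lia].
Qed.

Lemma aging_size_le1 u0 MaxLT p O :
    uniq (ids O) -> (forall y, y \in O -> 0 < rlt y)%N ->
  aging u0 MaxLT MaxLT p O -> (size O <= 1)%N.
Proof.
move=> UO rlt_gt0 ageO.
have ids_O : {subset ids O <= [:: u0]}.
  move=> _ /mapP[y y_O ->]; rewrite inE; apply: contraT => nyu0.
  by have [_] := ageO y y_O nyu0; have := rlt_gt0 y y_O; lia.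
by rewrite -(size_map (@uid _ T)) (uniq_leq_size UO ids_O).
Qed.

Section Run.
Variables (MinLT MaxLT : nat) (run : nat -> population T) (b0 : indiv T).
Hypotheses (MinLT_gt0 : (0 < MinLT)%N) (init : apga_init MinLT MaxLT (run 0%N)).
Hypotheses (step : forall t, apga_step MinLT MaxLT (run t) (run t.+1))
           (best_b0 : is_best (run 0%N) b0).

Lemma run_uniq t : uniq (ids (run t)).
Proof. by have [_ [U0 _]] := init; elim: t => // t; apply: apga_step_uniq. Qed.

Lemma run_rlt_gt0 t y : y \in run t -> (0 < rlt y)%N.
Proof.
have [_ [_ lt0]] := init.
case: t => [/lt0 /andP[+ _] | t]; [exact: leq_trans | exact: apga_step_rlt_gt0].
Qed.

Lemma run_split t : exists O Y, [/\ run t = O ++ Y, (size Y <= 2 * t)%N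
                                  & aging (uid b0) MaxLT t (run t) O].
Proof.
elim: t => [|t [O [Y [runOY sizeY ageO]]]].
  have [b0_run0 better_b0] := best_b0; have [_ [_ lt0]] := init.
  exists (run 0%N), [::]; split; rewrite ?cats0 // => y y_run0 nyb0.
  by split; [exists b0; last exact: better_b0 | rewrite addn0; case/andP: (lt0 y y_run0)].
have [b [f1 [f2 [i1 [i2 [l1 [l2 [best_b [_ [_ [_ [_ [_ runS]]]]]]]]]]]]] := step t.
have [b_run _] := best_b.
have b_runS : b \in run t.+1.
  by rewrite runS mem_cat mem_survivors_self // (run_rlt_gt0 b_run).
exists (survivors b O), (survivors b Y ++ [:: Indiv f1 i1 l1; Indiv f2 i2 l2]).
split; first by rewrite runS runOY catA -survivors_cat.
  by rewrite size_cat /= mulnS; have := size_survivors b Y; lia.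
apply: aging_survivors (run_uniq t) best_b _ b_runS ageO => y y_O.
by rewrite runOY mem_cat y_O.
Qed.

End Run.

End APGAPopulation.

Theorem theorem1 (d : Order.disp_t) (T : orderType d) (MinLT MaxLT : nat)
  (run : nat -> population T) :
  (1 <= MinLT <= MaxLT)%N ->
  apga_init MinLT MaxLT (run 0%N) ->
  (forall t, apga_step MinLT MaxLT (run t) (run t.+1)) ->
  (size (run MaxLT) <= 2 * MaxLT + 1)%N.
Proof.
move=> /andP[MinLT_gt0 _] init step.
have [b0 [_ [_ [_ [_ [_ [_ [best_b0 _]]]]]]]] := step 0%N.
have [O [Y [runOY sizeY ageO]]] := run_split MinLT_gt0 init step best_b0 MaxLT.
have UO : uniq (ids O).
  by move: (run_uniq init step MaxLT); rewrite runOY ids_cat cat_uniq => /andP[].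
have rltO y : y \in O -> (0 < rlt y)%N.
  move=> y_O; apply: (run_rlt_gt0 MinLT_gt0 init step (t := MaxLT)).
  by rewrite runOY mem_cat y_O.
by rewrite runOY size_cat; have := aging_size_le1 UO rltO ageO; lia.
Qed.
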